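(* Let $G$ be an $r$-regular graph with $k$ vertices, and for $d\ge 1$ let $G^d$ denote the join of $d$ identical copies of $G$. Then there exists a natural number $d_0$ such that for all $d\ge d_0$, $G^d$ is a Ramanujan graph.
   Context: All graphs are finite, simple and undirected. The join of graphs $G_1,\ldots,G_d$ is obtained from their disjoint union by adding an edge between every vertex of $G_i$ and every vertex of $G_j$ for all $i\ne j$. A connected $r$-regular graph with adjacency eigenvalues $\lambda_1\ge\cdots\ge\lambda_m$ (so $|\lambda_i|\le r$) is a Ramanujan graph if $\max_{|\lambda_i|<r}|\lambda_i|\le 2\sqrt{r-1}$. *)

From HB Require Import structures.
From mathcomp Require Import all_boot all_order all_algebra.
From mathcomp Require Import reals.
Set Implicit Arguments. Unset Strict Implicit. Unset Printing Implicit Defensive.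
Import Order.TTheory GRing.Theory Num.Theory.
Local Open Scope ring_scope.

Definition simple_graph (V : finType) (e : rel V) : Prop :=
  symmetric e /\ irreflexive e.

Definition regular (V : finType) (e : rel V) (r : nat) : Prop :=
  forall v : V, #|[set u | e v u]| = r.

Definition connected_graph (V : finType) (e : rel V) : Prop :=
  forall x y : V, connect e x y.

Definition adjmx (R : realType) (V : finType) (e : rel V) : 'M[R]_#|V| :=
  \matrix_(i, j) ((e (enum_val i) (enum_val j))%:R : R).

(* Connected r-regular graph whose eigenvalues lambda with |lambda| < r
   satisfy |lambda| <= 2 sqrt(r-1).  (Adjacency matrices are real symmetric,
   so all their eigenvalues lie in R.) *)
Definition ramanujan (R : realType) (V : finType) (e : rel V) (r : nat) : Prop :=
  connected_graph e /\ regular e r /\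
  forall lam : R, eigenvalue (adjmx R e) lam ->
    `|lam| < r%:R -> `|lam| <= 2 * Num.sqrt (r%:R - 1).

Definition join_copies (V : finType) (e : rel V) (d : nat) : rel ('I_d * V)%type :=
  fun x y => ((x.1 == y.1) && e x.2 y.2) || (x.1 != y.1).
Arguments join_copies {V} e d.

From mathcomp Require Import all_boot all_order all_algebra.
From mathcomp Require Import reals ring lra zify.
Set Implicit Arguments. Unset Strict Implicit. Unset Printing Implicit Defensive.
Import Order.TTheory GRing.Theory Num.Theory.
Local Open Scope ring_scope.

(* The join of d copies of a k-vertex r-regular graph is r'-regular with
   r' = r + (d-1)k.  Let f be an eigenvector for lam and S_i its sum over
   the i-th copy.  The eigen-equation gives lam S_i = r S_i + k (S - S_i), with
   S the total sum, hence lam S = r' S.  So either lam = r', or S = 0 and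
   (lam - (r - k)) S_i = 0 for all i: then lam = r - k, or every S_i vanishes
   and f restricted to each copy is an eigenvector of G, so |lam| <= r.  In all
   cases |lam| <= k, and k <= 2 sqrt(r' - 1) as soon as (d-1)k > k^2. *)

Lemma regular_sum_adj (R : pzSemiRingType) (V : finType) (e : rel V) (r : nat) w :
  regular e r -> \sum_(u : V) ((e w u)%:R : R) = r%:R.
Proof.
move=> er; rewrite -(er w) -natr_sum; congr _%:R.
rewrite -sum1_card [RHS]big_mkcond /=.
by apply: eq_bigr => u _; rewrite inE; case: (e w u).
Qed.

Lemma regular_eigen_norm_le (R : realDomainType) (V : finType) (e : rel V)
    (r : nat) (f : V -> R) (lam : R) :
  symmetric e -> regular e r ->
  (forall u, lam * f u = \sum_w f w * (e w u)%:R) -> (exists u, f u != 0) ->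
  `|lam| <= r%:R.
Proof.
move=> esym er eig [u0 fu0].
set m := [arg max_(u > u0) `|f u|]%O.
have f_le_m u : `|f u| <= `|f m| by rewrite /m; case: arg_maxP => // j _; apply.
have fm_gt0 : 0 < `|f m| by apply: lt_le_trans (f_le_m u0); rewrite normr_gt0.
rewrite -(ler_pM2r fm_gt0) -normrM eig.
apply: le_trans (ler_norm_sum _ _ _) _.
rewrite -(regular_sum_adj R m er) mulr_suml; apply: ler_sum => w _.
rewrite normrM normr_nat (esym w m) mulrC.
by apply: ler_wpM2l; [rewrite ler0n | apply: f_le_m].
Qed.

Lemma join_regular (V : finType) (e : rel V) (r d : nat) :
  regular e r -> regular (join_copies e d) (r + d.-1 * #|V|).
Proof.
move=> er x.
set inner := [set (x.1, w) | w in [set w | e x.2 w]].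
set outer := setX [set~ x.1] [set: V].
have -> : [set y | join_copies e d x y] = inner :|: outer.
  apply/setP => -[j w]; rewrite !inE /join_copies /=.
  case: eqP => [<-|ne] /=.
    rewrite eqxx /= !orbF; apply/idP/imsetP => [ew | [w' + [->]]].
      by exists w; rewrite ?inE.
    by rewrite inE.
  by rewrite andbT eq_sym; apply/esym/orP; right; apply/eqP.
have disj : [disjoint inner & outer].
  apply/pred0P => -[j w] /=; apply/negP => /andP[/imsetP[w' _ [-> _]]].
  by rewrite !inE eqxx.
rewrite cardsU (disjoint_setI0 disj) cards0 subn0 card_imset; last by move=> a b [].
by rewrite cardsX cardsC1 card_ord cardsT er.
Qed.

Lemma join_connected (V : finType) (e : rel V) (d : nat) :
  (2 <= d)%N -> connected_graph (join_copies e d).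
Proof.
move=> d_ge2 x y; case: (eqVneq x.1 y.1) => [eq_xy|ne_xy]; last first.
  by apply: connect1; rewrite /join_copies /= ne_xy orbT.
have : (0 < #|[set~ x.1]|)%N by rewrite cardsC1 card_ord; lia.
case/card_gt0P => j; rewrite !inE => ne_j.
apply: (connect_trans (y := (j, x.2))); apply: connect1.
  by rewrite /join_copies /= eq_sym ne_j orbT.
by rewrite /join_copies /= -eq_xy ne_j orbT.
Qed.

Section JoinEigenvector.

Variables (R : realDomainType) (V : finType) (e : rel V) (r d : nat).
Variables (f : 'I_d * V -> R) (lam : R).
Hypothesis esym : symmetric e.
Hypothesis er : regular e r.
Hypothesis eig : forall x, lam * f x = \sum_y f y * (join_copies e d y x)%:R.

Let S i := \sum_(w : V) f (i, w).
Let total := \sum_(i : 'I_d) S i.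

Lemma join_eigen_block i u :
  lam * f (i, u) = \sum_(w : V) f (i, w) * (e w u)%:R + (total - S i).
Proof.
rewrite eig (eq_bigr (fun y => f (y.1, y.2) * (join_copies e d (y.1, y.2) (i, u))%:R));
  last by case.
rewrite -(pair_bigA _ (fun j w => f (j, w) * (join_copies e d (j, w) (i, u))%:R)) /=.
rewrite (bigD1 i) //= /total [in RHS](bigD1 i) //= [X in _ + (X - _)]addrC addrK.
congr (_ + _); first by apply: eq_bigr => w _; rewrite /join_copies /= eqxx orbF.
apply: eq_bigr => j ne_j; apply: eq_bigr => w _.
by rewrite /join_copies /= (negbTE ne_j) mulr1.
Qed.

Lemma join_eigen_blocksum i : lam * S i = r%:R * S i + #|V|%:R * (total - S i).
Proof.
rewrite /S mulr_sumr (eq_bigr _ (fun u _ => join_eigen_block i u)) big_split /=.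
rewrite sumr_const exchange_big /= -[_ *+ #|_|]mulr_natl; congr (_ + _).
rewrite mulr_sumr; apply: eq_bigr => w _.
by rewrite -mulr_sumr (regular_sum_adj R w er) mulrC.
Qed.

Lemma join_eigen_total : lam * total = r%:R * total + #|V|%:R * (d%:R * total - total).
Proof.
rewrite /total mulr_sumr (eq_bigr _ (fun i _ => join_eigen_blocksum i)) big_split /=.
by rewrite -!mulr_sumr sumrB sumr_const card_ord -[_ *+ d]mulr_natl.
Qed.

Lemma join_blocksums_eq0 : total = 0 -> lam != r%:R - #|V|%:R -> forall i, S i = 0.
Proof.
move=> total0 ne_lam i; apply/eqP.
have : (lam - (r%:R - #|V|%:R)) * S i == 0.
  by rewrite mulrBl join_eigen_blocksum total0; apply/eqP; ring.
by rewrite mulf_eq0 subr_eq0 (negbTE ne_lam).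
Qed.

Lemma join_eigenvalue_cases :
  (exists x, f x != 0) -> lam = (r + d.-1 * #|V|)%:R \/ `|lam| <= #|V|%:R.
Proof.
move=> [x0 fx0].
have d_gt0 : (0 < d)%N by apply: leq_ltn_trans (ltn_ord x0.1).
have r_le : (r <= #|V|)%N by rewrite -(er x0.2) max_card.
have [->|ne_top] := eqVneq lam (r + d.-1 * #|V|)%:R; [by left | right].
have total0 : total = 0.
  have : (lam - (r + d.-1 * #|V|)%:R) * total == 0.
    by rewrite mulrBl join_eigen_total natrD natrM -subn1 natrB //; apply/eqP; ring.
  by rewrite mulf_eq0 subr_eq0 (negbTE ne_top) => /eqP.
have [->|ne_low] := eqVneq lam (r%:R - #|V|%:R).
  have : (r%:R : R) <= #|V|%:R by rewrite ler_nat.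
  have : (0 : R) <= r%:R by rewrite ler0n.
  by rewrite ler_norml => ? ?; apply/andP; split; lra.
move: x0 fx0 => [i u] fx0.
apply: le_trans (_ : (r%:R : R) <= _); last by rewrite ler_nat.
apply: (regular_eigen_norm_le (f := fun w => f (i, w)) esym er); last by exists u.
by move=> w; rewrite join_eigen_block (join_blocksums_eq0 total0 ne_low) total0 subr0 addr0.
Qed.

End JoinEigenvector.

Lemma adjmx_eigenvector (R : realType) (V : finType) (e : rel V) (lam : R) :
  eigenvalue (adjmx R e) lam ->
  exists2 f : V -> R, (exists x, f x != 0) &
    forall x, lam * f x = \sum_y f y * (e y x)%:R.
Proof.
move=> /eigenvalueP[v eig_v v_neq0]; exists (fun x => v 0 (enum_rank x)).
  apply/existsP; apply: contraNT v_neq0 => /existsPn v0.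
  by apply/eqP/rowP => j; have := v0 (enum_val j); rewrite enum_valK negbK mxE => /eqP.
move=> x; move/rowP: eig_v => /(_ (enum_rank x)); rewrite !mxE => <-.
rewrite (reindex enum_rank) /=; last by apply: onW_bij; exact: enum_rank_bij.
by apply: eq_bigr => y _; rewrite mxE !enum_rankK.
Qed.

Lemma natr_le_two_sqrt (R : rcfType) (k m : nat) :
  (k ^ 2 < m)%N -> (k%:R : R) <= 2 * Num.sqrt (m%:R - 1).
Proof.
move=> lt_km.
have km : (k%:R : R) ^+ 2 <= m%:R - 1 by rewrite lerBrDr -natrX natr1 ler_nat; lia.
have sq_le : (k%:R : R) <= Num.sqrt (m%:R - 1).
  by move: (km); rewrite -(ler_sqrt _ (le_trans (sqr_ge0 _) km)) sqrtr_sqr ger0_norm ?ler0n.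
have := sqrtr_ge0 (m%:R - 1 : R); lra.
Qed.

Unset Implicit Arguments.
Theorem mainTheorem6 (R : realType) (V : finType) (e : rel V) (r k : nat) :
  simple_graph e -> regular e r -> #|V| = k -> (0 < k)%N ->
  exists d0 : nat, forall d : nat, (1 <= d)%N -> (d0 <= d)%N ->
    exists r' : nat, @ramanujan R _ (join_copies e d) r'.
Proof.
move=> [esym _] er card_V k_gt0; exists k.+2 => d _ d_ge.
exists (r + d.-1 * #|V|)%N; split; first by apply: join_connected; lia.
split; first exact: join_regular.
move=> lam /adjmx_eigenvector[f f_neq0 eig] lt_lam.
have [lam_top|lam_le_k] := join_eigenvalue_cases esym er eig f_neq0.
  by rewrite lam_top ger0_norm ?ltxx ?ler0n in lt_lam.
apply: le_trans lam_le_k (natr_le_two_sqrt _ _); rewrite card_V; nia.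
Qed.
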